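(* Let $V\subset V'$ be an immediate extension of valuation rings, $K,K'$ their fraction fields, $\mathfrak m,\mathfrak m'$ their maximal ideals, $y_0\in V'$ and $y_1=y_0^2$. Assume $K'=K(y_0)$ and that for $e=0,1$, $y_e$ is a pseudo limit of a pseudo convergent sequence $v_e=(v_{e,j})_{j<\lambda_e}$ over $V$ which has no pseudo limit in $K$; set $y_{e,j}=(y_e-v_{e,j})/(v_{e,j+1}-v_{e,j})$. Then for every polynomial $g\in V[Y_0,Y_1]$ with $\deg_{Y_i}g\le1$ ($i=0,1$) and all ordinals $\nu_0<\lambda_0$, $\nu_1<\lambda_1$, there exist $\nu_0<j_0<\lambda_0$, $\nu_1<j_1<\lambda_1$, $c\in V\setminus\{0\}$ and a polynomial $g_1\in V[Y_{0,j_0},Y_{1,j_1}]$ such that $g(y_0,y_1)=c\,g_1(y_{0,j_0},y_{1,j_1})$, $g_1\notin\mathfrak m V[Y_{0,j_0},Y_{1,j_1}]$, and the values of the coefficients of all monomials of $g_1-g_1(0,0)$ are pairwise different.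
   Context: Let $\mathrm{val}$ denote the valuation of $V'$. For a limit ordinal $\lambda$, a sequence $(v_j)_{j<\lambda}$ in $V$ is pseudo convergent if $\mathrm{val}(v_i-v_{i''})<\mathrm{val}(v_{i'}-v_{i''})$ for all $i<i'<i''<\lambda$; $w$ is a pseudo limit if $\mathrm{val}(w-v_i)<\mathrm{val}(w-v_{i'})$ for all $i<i'<\lambda$. An extension of valuation rings is immediate if the induced residue field and value group extensions are equalities. *)

From HB Require Import structures.
From mathcomp Require Import all_boot all_order all_algebra.
Set Implicit Arguments. Unset Strict Implicit. Unset Printing Implicit Defensive.
Import Order.TTheory GRing.Theory Num.Theory.
Local Open Scope ring_scope.

(* Subsets of an ambient field L are modelled as predicates L -> Prop. *)
Section Defs.
Variable L : fieldType.

Definition subring (S : L -> Prop) : Prop :=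
  S 0 /\ S 1 /\ (forall x y, S x -> S y -> S (x - y)) /\
  (forall x y, S x -> S y -> S (x * y)).

Definition valuation_ring (S : L -> Prop) : Prop :=
  subring S /\ forall x, x != 0 -> S x \/ S x^-1.

Definition frac_field (S : L -> Prop) (x : L) : Prop :=
  exists a b, S a /\ S b /\ b != 0 /\ x = a / b.

Definition is_unit_of (S : L -> Prop) (x : L) : Prop :=
  x != 0 /\ S x /\ S x^-1.

Definition maxideal (S : L -> Prop) (x : L) : Prop :=
  S x /\ ~ is_unit_of S x.

(* val a <= val b for the valuation of the valuation ring S (val 0 = oo) *)
Definition vle (S : L -> Prop) (a b : L) : Prop :=
  (a = 0 -> b = 0) /\ (a != 0 -> S (b / a)).
Definition vlt (S : L -> Prop) (a b : L) : Prop := vle S a b /\ ~ vle S b a.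
Definition vsame (S : L -> Prop) (a b : L) : Prop := vle S a b /\ vle S b a.

Definition generated_by (K : L -> Prop) (y : L) : Prop :=
  forall x, exists p q : {poly L}, (forall i, K p`_i) /\ (forall i, K q`_i) /\
    q.[y] != 0 /\ x = p.[y] / q.[y].

(* evaluation of a bivariate polynomial: inner variable at a, outer at b *)
Definition eval2 (p : {poly {poly L}}) (a b : L) : L :=
  (map_poly (fun q : {poly L} => q.[a]) p).[b].

(* coefficient of Y1^i Y0^j (outer variable Y1, inner variable Y0) *)
Definition coef2 (p : {poly {poly L}}) (i j : nat) : L := (p`_i)`_j.

Section Seq.
Variables (d : Order.disp_t) (I : orderType d).

Definition limit_ordinal_type : Prop :=
  (exists i : I, True) /\ (forall i : I, exists j, (i < j)%O) /\
  (forall P : I -> Prop, (exists x, P x) ->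
     exists x, P x /\ forall y, P y -> (x <= y)%O).

Definition is_succ (s : I -> I) : Prop :=
  forall i, (i < s i)%O /\ forall k, (i < k)%O -> (s i <= k)%O.

Definition pseudo_convergent (S : L -> Prop) (v : I -> L) : Prop :=
  forall i i' i'', (i < i')%O -> (i' < i'')%O ->
    vlt S (v i - v i'') (v i' - v i'').

Definition pseudo_limit (S : L -> Prop) (v : I -> L) (w : L) : Prop :=
  forall i i', (i < i')%O -> vlt S (w - v i) (w - v i').

Definition yj (v : I -> L) (s : I -> I) (y : L) (j : I) : L :=
  (y - v j) / (v (s j) - v j).
End Seq.
End Defs.

From HB Require Import structures.
From mathcomp Require Import all_boot all_order all_algebra.
From mathcomp Require Import ring.
From Stdlib Require Import Classical.

(* With d_{e,j} = v_{e,j+1} - v_{e,j} we have y_e = v_{e,j} + d_{e,j} y_{e,j}, so g(y_0, y_1)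
   is the value at (y_{0,j_0}, y_{1,j_1}) of the polynomial G obtained from g by the substitution
   Y_e = v_{e,j_e} + d_{e,j_e} Y_{e,j_e}. The values of the d_{e,j} increase strictly with j, and
   for z in K (never a pseudo limit) the value of z - v_{e,j} is eventually constant and
   smaller than that of d_{e,j}. For z_0 = -g_{10}/g_{11} and z_1 = -g_{01}/g_{11} this puts the
   value of the coefficient of Y_0 Y_1 strictly above those of Y_0 and Y_1; the value of the
   Y_0-coefficient does not depend on j_1 while that of the Y_1-coefficient increases with j_1,
   so a larger j_1 separates them. Dividing G by a coefficient of least value gives g_1.
   The statement allows g = 0: then the same argument, applied to Y_0^2 - Y_1, gives a g_1
   vanishing at (y_{0,j_0}, y_{1,j_1}). *)

Set Implicit Arguments. Unset Strict Implicit. Unset Printing Implicit Defensive.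
Import Order.TTheory GRing.Theory Num.Theory.
Local Open Scope ring_scope.

Section Bipoly.
Variable L : fieldType.

Definition bipoly (c00 c01 c02 c10 c11 : L) : {poly {poly L}} :=
  Poly [:: Poly [:: c00; c01; c02]; Poly [:: c10; c11]].

Lemma coef2_bipoly c00 c01 c02 c10 c11 i j :
  coef2 (bipoly c00 c01 c02 c10 c11) i j =
  nth 0 (nth [::] [:: [:: c00; c01; c02]; [:: c10; c11]] i) j.
Proof. by rewrite /coef2 coef_Poly; case: i => [|[|i]]; rewrite ?coef_Poly //= !nth_nil coef0. Qed.

Lemma bipoly_coef2P (P : L -> Prop) c00 c01 c02 c10 c11 :
  P 0 -> P c00 -> P c01 -> P c02 -> P c10 -> P c11 ->
  forall i j, P (coef2 (bipoly c00 c01 c02 c10 c11) i j).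
Proof.
move=> P0 P00 P01 P02 P10 P11 i j; rewrite coef2_bipoly.
by case: i => [|[|i]]; case: j => [|[|[|j]]]; rewrite /= ?nth_nil.
Qed.

Lemma poly_neq0_coef2 (G : {poly {poly L}}) i j : coef2 G i j != 0 -> G != 0.
Proof. by apply: contraNneq => ->; rewrite /coef2 !coef0. Qed.

Lemma eval2_bipoly c00 c01 c02 c10 c11 a b :
  eval2 (bipoly c00 c01 c02 c10 c11) a b =
  c00 + c01 * a + c02 * a ^+ 2 + (c10 + c11 * a) * b.
Proof. by rewrite /eval2 map_Poly_id0 ?horner0 // horner_Poly /= !horner_cons !hornerC; ring. Qed.

Lemma eval2_mulC (G : {poly {poly L}}) k a b :
  eval2 (G * k%:P%:P) a b = eval2 G a b * k.
Proof.
rewrite /eval2 (_ : (fun q : {poly L} => q.[a]) = horner_eval a) //.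
by rewrite rmorphM /= map_polyC /= hornerM hornerC horner_evalE hornerC.
Qed.

Lemma coef2_mulC (G : {poly {poly L}}) k i j : coef2 (G * k%:P%:P) i j = coef2 G i j * k.
Proof. by rewrite /coef2 !coefMC. Qed.

Lemma bilinear_bipoly (g : {poly {poly L}}) :
  (size g <= 2)%N -> (forall i, leq (size g`_i) 2) ->
  g = bipoly (coef2 g 0 0) (coef2 g 0 1) 0 (coef2 g 1 0) (coef2 g 1 1).
Proof.
move=> hg hgi; apply/polyP => i; apply/polyP => j.
rewrite -[RHS]/(coef2 _ i j) coef2_bipoly /coef2.
case: i => [|[|i]]; last first.
  by rewrite [g`_i.+2]nth_default /= ?nth_nil ?coef0 //; apply: leq_trans hg _.
all: case: j => [|[|[|j]]] //=; rewrite ?nth_nil nth_default //; exact: leq_trans (hgi _) _.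
Qed.

Definition square_subst (v d w e : L) : {poly {poly L}} :=
  bipoly (v * v - w) ((v + v) * d) (d * d) (- e) 0.

Lemma eval2_square_subst v d w e a b :
  eval2 (square_subst v d w e) a b = (v + d * a) ^+ 2 - (w + e * b).
Proof. by rewrite eval2_bipoly; ring. Qed.

Definition bilinear_subst (g00 g01 g10 g11 v d w e : L) : {poly {poly L}} :=
  bipoly (g00 + g01 * v + g10 * w + g11 * v * w) ((g01 + g11 * w) * d) 0
         ((g10 + g11 * v) * e) (g11 * d * e).

Lemma eval2_bilinear_subst g00 g01 g10 g11 v d w e a b :
  eval2 (bilinear_subst g00 g01 g10 g11 v d w e) a b =
  g00 + g01 * (v + d * a) + (g10 + g11 * (v + d * a)) * (w + e * b).
Proof. by rewrite eval2_bipoly; ring. Qed.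

Lemma bilinear_subst_neq0 g00 g01 g10 g11 v d w e : d != 0 -> e != 0 ->
  ~~ [&& g00 == 0, g01 == 0, g10 == 0 & g11 == 0] ->
  bilinear_subst g00 g01 g10 g11 v d w e != 0.
Proof.
move=> d0 e0; have [g11_0|g11_neq0] := eqVneq g11 0; last first.
  by move=> _; apply: (@poly_neq0_coef2 _ 1 1); rewrite coef2_bipoly /= !mulf_neq0.
rewrite andbT /bilinear_subst g11_0 !mul0r !addr0.
have [g01_0|g01_neq0] := eqVneq g01 0; last first.
  by move=> _; apply: (@poly_neq0_coef2 _ 0 1); rewrite coef2_bipoly /= mulf_neq0.
have [g10_0|g10_neq0] := eqVneq g10 0; last first.
  by move=> _; apply: (@poly_neq0_coef2 _ 1 0); rewrite coef2_bipoly /= mulf_neq0.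
rewrite g01_0 g10_0 !mul0r !addr0 !andbT => g00_neq0.
by apply: (@poly_neq0_coef2 _ 0 0); rewrite coef2_bipoly.
Qed.

Definition coefs2 (G : {poly {poly L}}) : seq L :=
  [seq coef2 G i j | i <- iota 0 (size G), j <- iota 0 (size G`_i)].

Lemma mem_coefs2 G i j : coef2 G i j != 0 -> coef2 G i j \in coefs2 G.
Proof.
move=> Gij; apply/allpairsPdep; exists i, j.
split=> //; rewrite mem_iota /= add0n; apply: contraNT Gij; rewrite -leqNgt => ?.
  by rewrite /coef2 [G`_i]nth_default ?coef0.
by rewrite /coef2 nth_default.
Qed.
End Bipoly.

Definition vdistinct (L : fieldType) (S : L -> Prop) (a b : L) : Prop :=
  a != 0 -> b != 0 -> ~ vsame S a b.

Definition coef_values_distinct (L : fieldType) (S : L -> Prop) (G : {poly {poly L}}) :=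
  forall i j i' j' : nat, (i, j) <> (0%N, 0%N) -> (i', j') <> (0%N, 0%N) ->
    (i, j) <> (i', j') -> vdistinct S (coef2 G i j) (coef2 G i' j').

Definition step (L : fieldType) (d : Order.disp_t) (I : orderType d)
  (v : I -> L) (s : I -> I) (j : I) : L := v (s j) - v j.

Section Subring.
Variables (L : fieldType) (S : L -> Prop).
Hypothesis hS : subring S.

Lemma subring0 : S 0. Proof. by case: hS. Qed.
Lemma subring1 : S 1. Proof. by case: hS => _ []. Qed.
Lemma subringB x y : S x -> S y -> S (x - y). Proof. by case: hS => _ [_ [hB _]]; apply: hB. Qed.
Lemma subringM x y : S x -> S y -> S (x * y). Proof. by case: hS => _ [_ [_ hM]]; apply: hM. Qed.
Lemma subringN x : S x -> S (- x).
Proof. by move=> Sx; rewrite -sub0r; apply: subringB Sx; apply: subring0. Qed.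
Lemma subringD x y : S x -> S y -> S (x + y).
Proof. by move=> Sx Sy; rewrite -[y]opprK; apply: subringB Sx (subringN Sy). Qed.

Lemma is_unit_of1 : is_unit_of S 1.
Proof. by split; [exact: oner_neq0|rewrite invr1; split; exact: subring1]. Qed.

Lemma frac_field_div a b : S a -> S b -> frac_field S (a / b).
Proof.
move=> Sa Sb; have [->|b0] := eqVneq b 0; last by exists a, b.
exists 0, 1; rewrite invr0 mulr0 mul0r oner_neq0.
by split; [exact: subring0|split; [exact: subring1|]].
Qed.

Lemma frac_field0 : frac_field S 0.
Proof. by rewrite -(mul0r 1^-1); apply: frac_field_div; [exact: subring0|exact: subring1]. Qed.
End Subring.

Section ValueRelations.
Variables (L : fieldType) (S : L -> Prop).

Lemma vle0_eq0 b : vle S 0 b -> b = 0.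
Proof. by case=> + _; apply. Qed.

Lemma vsame_sym a b : vsame S a b -> vsame S b a. Proof. by case. Qed.

Lemma vsame_neq0 a b : vsame S a b -> b != 0 -> a != 0.
Proof. by move=> [[ab0 _] _]; apply: contraNneq => /ab0->. Qed.

Lemma vlt_vdistinct a b : vlt S a b -> vdistinct S a b.
Proof. by move=> [_ ba] _ _ [_]. Qed.

Lemma vdistinct_sym a b : vdistinct S a b -> vdistinct S b a.
Proof. by move=> ab b0 a0 /vsame_sym; apply: ab. Qed.

Lemma vdistinctx0 a : vdistinct S a 0.
Proof. by move=> _; rewrite eqxx. Qed.

Lemma vdistinct0x a : vdistinct S 0 a.
Proof. by rewrite /vdistinct eqxx. Qed.

Lemma bipoly_coef_values_distinct c00 c01 c02 c10 c11 :
  vdistinct S c01 c02 -> vdistinct S c01 c10 -> vdistinct S c01 c11 ->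
  vdistinct S c02 c10 -> vdistinct S c02 c11 -> vdistinct S c10 c11 ->
  coef_values_distinct S (bipoly c00 c01 c02 c10 c11).
Proof.
move=> h1 h2 h3 h4 h5 h6 i j i' j'; rewrite !coef2_bipoly.
case: i => [|[|i]]; case: j => [|[|[|j]]]; case: i' => [|[|i']]; case: j' => [|[|[|j']]];
  rewrite /= ?nth_nil => ij i'j' ne;
  solve [done | exact: vdistinctx0 | exact: vdistinct0x | exact: vdistinct_sym].
Qed.
End ValueRelations.

Section Valuation.
Variables (L : fieldType) (S : L -> Prop).
Hypothesis hS : valuation_ring S.
Let SD := subringD hS.1.
Let SN := subringN hS.1.
Let SM := subringM hS.1.

Lemma vle_refl a : vle S a a.
Proof. by split=> // a0; rewrite divff //; exact: subring1 hS.1. Qed.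

Lemma vlex0 a : vle S a 0.
Proof. by split=> // _; rewrite mul0r; exact: subring0 hS.1. Qed.

Lemma vle_trans a b c : vle S a b -> vle S b c -> vle S a c.
Proof.
move=> [ab0 ab] [bc0 bc]; split=> [/ab0/bc0 //|a0].
have [b0|b0] := eqVneq b 0; first by rewrite bc0 // mul0r; apply: subring0 hS.1.
have -> : c / a = c / b * (b / a) by rewrite mulrA divfK.
by apply: SM; [apply: bc|apply: ab].
Qed.

Lemma vle_total a b : vle S a b \/ vle S b a.
Proof.
have [->|a0] := eqVneq a 0; first by right; apply: vlex0.
have [->|b0] := eqVneq b 0; first by left; apply: vlex0.
have [ba|ab] := hS.2 (b / a) (mulf_neq0 b0 (invr_neq0 a0)).
  by left; split=> // /eqP; rewrite (negPf a0).
by right; split=> [/eqP|_]; rewrite ?(negPf b0) // -invf_div.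
Qed.

Lemma vleD a b c : vle S a b -> vle S a c -> vle S a (b + c).
Proof.
move=> [ab0 ab] [ac0 ac]; split=> [a0|a0]; first by rewrite ab0 // ac0 // addr0.
by rewrite mulrDl; apply: SD; [apply: ab|apply: ac].
Qed.

Lemma vleN a b : vle S a b -> vle S a (- b).
Proof.
move=> [ab0 ab]; split=> [a0|a0]; first by rewrite ab0 // oppr0.
by rewrite mulNr; apply/SN/ab.
Qed.

Lemma vleM a b c : vle S a b -> vle S (a * c) (b * c).
Proof.
move=> [ab0 ab]; have [->|c0] := eqVneq c 0; first by rewrite !mulr0; apply: vle_refl.
split=> [/eqP|ac0]; first by rewrite mulf_eq0 (negPf c0) orbF => /eqP/ab0->; rewrite mul0r.
rewrite invfM mulrACA divff // mulr1; apply: ab.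
by apply: contraNneq ac0 => ->; rewrite mul0r.
Qed.

Lemma vleMK a b c : c != 0 -> vle S (a * c) (b * c) -> vle S a b.
Proof. by move=> c0 /(vleM c^-1); rewrite !mulfK. Qed.

Lemma vlt_neq0 a b : vlt S a b -> a != 0.
Proof. by case=> _ ba; apply/eqP => a0; apply: ba; rewrite a0; apply: vlex0. Qed.

Lemma vle_lt_trans a b c : vle S a b -> vlt S b c -> vlt S a c.
Proof. by move=> ab [bc cb]; split=> [|ca]; [apply: vle_trans ab bc|apply/cb/(vle_trans ca)]. Qed.

Lemma vlt_le_trans a b c : vlt S a b -> vle S b c -> vlt S a c.
Proof. by move=> [ab ba] bc; split=> [|ca]; [apply: vle_trans ab bc|apply/ba/(vle_trans bc)]. Qed.

Lemma vlt_trans a b c : vlt S a b -> vlt S b c -> vlt S a c.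
Proof. by move=> ab [bc _]; apply: vlt_le_trans ab bc. Qed.

Lemma vsame_refl a : vsame S a a. Proof. by split; apply: vle_refl. Qed.

Lemma vsame_trans a b c : vsame S a b -> vsame S b c -> vsame S a c.
Proof. by move=> [ab ba] [bc cb]; split; [apply: vle_trans bc|apply: vle_trans ba]. Qed.

Lemma vsameN a : vsame S a (- a).
Proof. by split; [|rewrite -{2}[a]opprK]; apply/vleN/vle_refl. Qed.

Lemma vsameM a b c : vsame S a b -> vsame S (a * c) (b * c).
Proof. by case=> ab ba; split; apply: vleM. Qed.

Lemma vsameMK a b c : c != 0 -> vsame S (a * c) (b * c) -> vsame S a b.
Proof. by move=> c0 [ab ba]; split; apply: vleMK c0 _. Qed.

Lemma vltM a b c : c != 0 -> vlt S a b -> vlt S (a * c) (b * c).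
Proof. by move=> c0 [ab ba]; split=> [|/(vleMK c0)//]; apply: vleM. Qed.

Lemma vlt_vsame a b a' b' : vsame S a a' -> vsame S b b' -> vlt S a b -> vlt S a' b'.
Proof. by move=> [_ a'a] [bb' _] ab; apply: vle_lt_trans a'a (vlt_le_trans ab bb'). Qed.

Lemma vlt_vsameD a b : vlt S a b -> vsame S a (a + b).
Proof.
move=> [ab ba]; split; first by apply: vleD ab; apply: vle_refl.
have [abb|babb] := vle_total (a + b) b.
  by have := vleD (vle_refl (a + b)) (vleN abb); rewrite addrK.
by case: ba; have := vleD babb (vleN (vle_refl b)); rewrite addrK.
Qed.

Lemma vlt_vsameB a b : vlt S a b -> vsame S a (a - b).
Proof. by move=> ab; apply/vlt_vsameD/(vlt_vsame (vsame_refl a) (vsameN b)). Qed.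

Lemma vdistinctM a b c : c != 0 -> vdistinct S a b -> vdistinct S (a * c) (b * c).
Proof.
move=> c0 ab ac0 bc0 /(vsameMK c0); apply: ab.
- by apply: contraNneq ac0 => ->; rewrite mul0r.
- by apply: contraNneq bc0 => ->; rewrite mul0r.
Qed.

Lemma vdistinct_vsame a b a' b' :
  vsame S a a' -> vsame S b b' -> vdistinct S a b -> vdistinct S a' b'.
Proof.
move=> aa' bb' ab a'0 b'0 a'b'; apply: ab (vsame_neq0 aa' a'0) (vsame_neq0 bb' b'0) _.
exact: vsame_trans aa' (vsame_trans a'b' (vsame_sym bb')).
Qed.

Lemma coef_values_distinct_mulC G k :
  k != 0 -> coef_values_distinct S G -> coef_values_distinct S (G * k%:P%:P).
Proof. by move=> k0 hG i j i' j' ij i'j' ne; rewrite !coef2_mulC; apply/vdistinctM/hG. Qed.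

Lemma exists_vmin x0 (l : seq L) :
  exists2 c, c \in x0 :: l & forall x, x \in x0 :: l -> vle S c x.
Proof.
elim: l x0 => [|x l IHl] x0.
  by exists x0 => [|y]; rewrite ?mem_head // mem_seq1 => /eqP->; apply: vle_refl.
have [c cl cmin] := IHl x; have [cx0|x0c] := vle_total c x0.
  exists c => [|y]; first by rewrite inE cl orbT.
  by rewrite inE => /orP[/eqP->|/cmin].
exists x0 => [|y]; first exact: mem_head.
by rewrite inE => /orP[/eqP->|/cmin/(vle_trans x0c)//]; apply: vle_refl.
Qed.

Lemma exists_vmin_coef2 G : G != 0 ->
  exists i j, coef2 G i j != 0 /\ forall i' j', vle S (coef2 G i j) (coef2 G i' j').
Proof.
move=> G0; set x0 := coef2 G (size G).-1 (size (lead_coef G)).-1.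
have x0n : x0 != 0 by rewrite /x0 /coef2 -!lead_coefE !lead_coef_eq0.
have [c cG cmin] := exists_vmin x0 (coefs2 G).
have c0 : c != 0.
  by apply: contraNneq x0n => c0; apply/eqP/vle0_eq0; rewrite -c0; apply/cmin/mem_head.
have [i [j cE]] : exists i j, c = coef2 G i j.
  move: cG; rewrite inE => /orP[/eqP->|/allpairsPdep[i [j [_ _ ->]]]].
    by exists (size G).-1, (size (lead_coef G)).-1.
  by exists i, j.
exists i, j; rewrite -cE; split=> // i' j'.
have [->|Gij] := eqVneq (coef2 G i' j') 0; first exact: vlex0.
by apply: cmin; rewrite inE mem_coefs2 ?orbT.
Qed.

Section PseudoLimit.
Variables (d : Order.disp_t) (I : orderType d) (s : I -> I) (v : I -> L) (y : L).
Hypotheses (hs : is_succ s) (hy : pseudo_limit S v y).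

Lemma lt_succ k : (k < s k)%O. Proof. by case: (hs k). Qed.

Lemma vsame_sub_limit i k : (i < k)%O -> vsame S (v k - v i) (y - v i).
Proof.
move=> ik; have := vlt_vsameB (hy ik).
have -> : y - v i - (y - v k) = v k - v i by ring.
exact: vsame_sym.
Qed.

Lemma step_vsame k : vsame S (step v s k) (y - v k).
Proof. exact: vsame_sub_limit (lt_succ k). Qed.

Lemma step_neq0 k : step v s k != 0.
Proof. exact: vsame_neq0 (step_vsame k) (vlt_neq0 (hy (lt_succ k))). Qed.

Lemma vlt_step i j : (i < j)%O -> vlt S (step v s i) (step v s j).
Proof. by move=> ij; apply: vlt_vsame (hy ij); apply: vsame_sym; apply: step_vsame. Qed.

Lemma yj_decomp k : y = v k + step v s k * yj v s y k.
Proof. by rewrite /yj mulrC divfK ?step_neq0 // addrC subrK. Qed.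

Lemma below_limit_stable z k j : vlt S (z - v k) (y - v k) -> (k <= j)%O ->
  vsame S (z - v j) (z - v k) /\ vlt S (z - v j) (y - v j).
Proof.
move=> zk; rewrite le_eqVlt => /orP[/eqP<-|kj]; first by split=> //; apply: vsame_refl.
have zj : vsame S (z - v k) (z - v j).
  have := vlt_vsameB (vlt_vsame (vsame_refl _) (vsame_sym (vsame_sub_limit kj)) zk).
  by rewrite opprB addrA subrK.
split; first exact: vsame_sym.
exact: vlt_vsame zj (vsame_refl _) (vlt_trans zk (hy kj)).
Qed.

Lemma exists_below_limit z nu : ~ pseudo_limit S v z ->
  exists2 k, (nu < k)%O & vlt S (z - v k) (y - v k).
Proof.
move=> zlim; apply: NNPP => nok; apply: zlim => i i' ii'.
have above k : (nu < k)%O -> vle S (y - v k) (z - v k).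
  move=> nuk; apply: NNPP => yz; apply: nok; exists k => //.
  by have [zy|//] := vle_total (z - v k) (y - v k).
set k := s (Order.max i' nu).
have i'k : (i' < k)%O by apply: le_lt_trans (lt_succ _); rewrite le_max lexx.
have nuk : (nu < k)%O by apply: le_lt_trans (lt_succ _); rewrite le_max lexx orbT.
have below j : (j < k)%O -> vsame S (z - v j) (y - v j).
  move=> jk; have := vlt_le_trans (hy jk) (above k nuk).
  move=> /(vlt_vsame (vsame_sym (vsame_sub_limit jk)) (vsame_refl _))/vlt_vsameD.
  have -> : v k - v j + (z - v k) = z - v j by ring.
  by move=> /vsame_sym/vsame_trans; apply; apply: vsame_sub_limit.
exact: vlt_vsame (vsame_sym (below i (lt_trans ii' i'k))) (vsame_sym (below i' i'k)) (hy ii').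
Qed.

Lemma eventually_below_limit z nu : ~ pseudo_limit S v z ->
  exists2 k, (nu < k)%O & forall j, (k <= j)%O ->
    vsame S (z - v j) (z - v k) /\ vlt S (z - v j) (step v s j).
Proof.
move=> /(exists_below_limit nu) [k nuk zk]; exists k => // j kj.
have [zj zyj] := below_limit_stable zk kj; split=> //.
exact: vlt_vsame (vsame_refl _) (vsame_sym (step_vsame j)) zyj.
Qed.

Lemma exists_vdistinct (B : I -> L) k (Xs : seq L) :
  (forall i j, (k <= i)%O -> (i < j)%O -> B i != 0 -> vlt S (B i) (B j)) ->
  exists2 j, (k <= j)%O & forall X, X \in Xs -> vdistinct S (B j) X.
Proof.
elim: Xs k => [|X Xs IHXs] k hB; first by exists k.
have [j kj jXs] := IHXs k hB.
have [Bj0|Bj0] := eqVneq (B j) 0.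
  by exists j => // x _; rewrite Bj0; apply: vdistinct0x.
case: (classic (vsame S (B j) X)) => BjX; last first.
  by exists j => // x; rewrite inE => /orP[/eqP-> _ _ //|]; apply: jXs.
have ksj i : (s j <= i)%O -> (k <= i)%O.
  by move=> sji; apply: le_trans kj (le_trans (ltW (lt_succ j)) sji).
have [j' sjj' j'Xs] := IHXs (s j) (fun i i' sji => hB i i' (ksj i sji)).
have jj' : (j < j')%O := lt_le_trans (lt_succ j) sjj'.
exists j' => [|x]; first exact: ksj.
rewrite inE => /orP[/eqP->|/j'Xs //].
exact: vdistinct_vsame (vsame_refl _) BjX (vdistinct_sym (vlt_vdistinct (hB _ _ kj jj' Bj0))).
Qed.
End PseudoLimit.

Lemma vsame_affine a b x x' :
  vsame S (- b / a - x) (- b / a - x') -> vsame S (b + a * x) (b + a * x').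
Proof.
have [->|a0] := eqVneq a 0; first by rewrite !mul0r => _; apply: vsame_refl.
have e u : b + a * u = (- b / a - u) * - a by field.
by rewrite !e; apply: vsameM.
Qed.

Lemma vlt_affine a b x t : a != 0 ->
  vlt S (- b / a - x) t -> vlt S (b + a * x) (a * t).
Proof.
move=> a0 /(vltM (c := - a)); rewrite oppr_eq0 => /(_ a0).
have -> : (- b / a - x) * - a = b + a * x by field.
by apply: vlt_vsame (vsame_refl _) _; rewrite mulrN mulrC; apply/vsame_sym/vsameN.
Qed.
End Valuation.

Section ChangeOfVariables.
Variables (L : fieldType) (S V : L -> Prop).
Hypotheses (hS : valuation_ring S) (hV : subring V).
Variables (d0 : Order.disp_t) (I0 : orderType d0) (s0 : I0 -> I0) (v0 : I0 -> L).
Variables (d1 : Order.disp_t) (I1 : orderType d1) (s1 : I1 -> I1) (v1 : I1 -> L).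
Variables y0 y1 : L.
Hypotheses (hs0 : is_succ s0) (hs1 : is_succ s1).
Hypotheses (hv0 : forall j, V (v0 j)) (hv1 : forall j, V (v1 j)).
Hypotheses (hy0 : pseudo_limit S v0 y0) (hy1 : pseudo_limit S v1 y1).
Hypothesis hnl0 : forall z, frac_field V z -> ~ pseudo_limit S v0 z.
Hypothesis hnl1 : forall z, frac_field V z -> ~ pseudo_limit S v1 z.
Hypothesis y1E : y1 = y0 ^+ 2.

Let VD := subringD hV.
Let VB := subringB hV.
Let VM := subringM hV.
Let VN := subringN hV.

Lemma exists_square_relation nu0 nu1 :
  exists j0 j1 (G : {poly {poly L}}),
    [/\ (nu0 < j0)%O && (nu1 < j1)%O, (forall i j, V (coef2 G i j)), G != 0,
        coef_values_distinct S G & eval2 G (yj v0 s0 y0 j0) (yj v1 s1 y1 j1) = 0].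
Proof.
have [k0 nuk0 hk0] := eventually_below_limit hS hs0 hy0 nu0 (hnl0 (frac_field0 hV)).
have [j0 k0j0 hj0] :=
  exists_vdistinct hS hs0 (B := step v0 s0) (k := k0) [:: v0 k0 + v0 k0]
    (fun i j _ ij _ => vlt_step hS hs0 hy0 ij).
set v := v0 j0; set d := step v0 s0 j0.
have [j1 nuj1 hj1] :=
  exists_vdistinct hS hs1 (B := step v1 s1) (k := s1 nu1) [:: (v + v) * d; d * d]
    (fun i j _ ij _ => vlt_step hS hs1 hy1 ij).
set w := v1 j1; set e := step v1 s1 j1.
have d_neq0 : d != 0 := step_neq0 hS hs0 hy0 j0.
exists j0, j1, (square_subst v d w e); split.
- by rewrite (lt_le_trans nuk0 k0j0) (lt_le_trans (lt_succ hs1 nu1) nuj1).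
- have Vd : V d := VB (hv0 _) (hv0 _).
  have Ve : V e := VB (hv1 _) (hv1 _).
  apply: bipoly_coef2P; first exact: subring0 hV; last exact: subring0 hV.
  + exact: VB (VM (hv0 _) (hv0 _)) (hv1 _).
  + exact: VM (VD (hv0 _) (hv0 _)) Vd.
  + exact: (VM Vd Vd).
  + exact: (VN Ve).
- by apply: (@poly_neq0_coef2 _ _ 0 2); rewrite coef2_bipoly /= mulf_neq0.
- have vv : vsame S (v0 k0 + v0 k0) (v + v).
    have := vsameM hS (- 2%:R) (hk0 j0 k0j0).1.
    by rewrite !sub0r !mulrNN !mulr_natr !mulr2n => /vsame_sym.
  have e_vdistinct X : X \in [:: (v + v) * d; d * d] -> vdistinct S X (- e).
    by move=> /hj1 eX; apply/vdistinct_sym/(vdistinct_vsame hS (vsameN hS e) (vsame_refl hS _)).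
  apply: bipoly_coef_values_distinct; try exact: vdistinctx0.
  + apply/vdistinct_sym/(vdistinctM hS d_neq0)/(vdistinct_vsame hS (vsame_refl hS d) vv).
    by apply: hj0; rewrite mem_seq1.
  + by apply: e_vdistinct; rewrite !inE eqxx.
  + by apply: e_vdistinct; rewrite !inE eqxx orbT.
- by rewrite eval2_square_subst -(yj_decomp hS hs0 hy0) -(yj_decomp hS hs1 hy1) y1E subrr.
Qed.

Lemma exists_bilinear_change g00 g01 g10 g11 nu0 nu1 :
  V g00 -> V g01 -> V g10 -> V g11 -> ~~ [&& g00 == 0, g01 == 0, g10 == 0 & g11 == 0] ->
  exists j0 j1 (G : {poly {poly L}}),
    [/\ (nu0 < j0)%O && (nu1 < j1)%O, (forall i j, V (coef2 G i j)), G != 0,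
        coef_values_distinct S G &
        g00 + g01 * y0 + (g10 + g11 * y0) * y1 = eval2 G (yj v0 s0 y0 j0) (yj v1 s1 y1 j1)].
Proof.
move=> V00 V01 V10 V11 g_neq0.
(* If g11 = 0 both points below are 0 (x / 0 = 0); the comparisons they serve are then vacuous. *)
have [j0 nuj0 hj0] :=
  eventually_below_limit hS hs0 hy0 nu0 (hnl0 (frac_field_div hV (VN V10) V11)).
have [k1 nuk1 hk1] :=
  eventually_below_limit hS hs1 hy1 nu1 (hnl1 (frac_field_div hV (VN V01) V11)).
set v := v0 j0; set d := step v0 s0 j0; set X := g10 + g11 * v.
have d_neq0 : d != 0 := step_neq0 hS hs0 hy0 j0.
have hB i j : (k1 <= i)%O -> (i < j)%O -> X * step v1 s1 i != 0 ->
    vlt S (X * step v1 s1 i) (X * step v1 s1 j).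
  move=> _ ij; rewrite mulf_eq0 negb_or => /andP[X_neq0 _].
  by rewrite ![X * _]mulrC; apply: (vltM hS X_neq0 (vlt_step hS hs1 hy1 ij)).
have [j1 k1j1 hj1] := exists_vdistinct hS hs1 [:: (g01 + g11 * v1 k1) * d] hB.
set w := v1 j1; set e := step v1 s1 j1.
have e_neq0 : e != 0 := step_neq0 hS hs1 hy1 j1.
exists j0, j1, (bilinear_subst g00 g01 g10 g11 v d w e); split.
- by rewrite nuj0 (lt_le_trans nuk1 k1j1).
- have Vd : V d := VB (hv0 _) (hv0 _).
  have Ve : V e := VB (hv1 _) (hv1 _).
  have Vv : V v := hv0 _.
  have Vw : V w := hv1 _.
  apply: bipoly_coef2P; try exact: subring0 hV.
  + exact: VD (VD (VD V00 (VM V01 Vv)) (VM V10 Vw)) (VM (VM V11 Vv) Vw).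
  + exact: VM (VD V01 (VM V11 Vw)) Vd.
  + exact: VM (VD V10 (VM V11 Vv)) Ve.
  + exact: VM (VM V11 Vd) Ve.
- exact: bilinear_subst_neq0.
- have c01_c10 : vsame S ((g01 + g11 * v1 k1) * d) ((g01 + g11 * w) * d).
    exact/(vsameM hS)/(vsame_affine hS)/vsame_sym/(hk1 _ k1j1).1.
  apply: bipoly_coef_values_distinct; try exact: vdistinctx0; try exact: vdistinct0x.
  + apply/vdistinct_sym/(vdistinct_vsame hS (vsame_refl hS _) c01_c10).
    by apply: hj1; rewrite mem_seq1.
  + have [->|g11_neq0] := eqVneq g11 0; first by rewrite !mul0r; apply: vdistinctx0.
    apply: vlt_vdistinct; rewrite mulrAC.
    exact: (vltM hS d_neq0 (vlt_affine hS g11_neq0 (hk1 _ k1j1).2)).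
  + have [->|g11_neq0] := eqVneq g11 0; first by rewrite !mul0r; apply: vdistinctx0.
    exact/vlt_vdistinct/(vltM hS e_neq0 (vlt_affine hS g11_neq0 (hj0 _ (lexx j0)).2)).
- by rewrite eval2_bilinear_subst -(yj_decomp hS hs0 hy0) -(yj_decomp hS hs1 hy1).
Qed.

Lemma exists_change_of_variables (g : {poly {poly L}}) nu0 nu1 :
  (forall i j, V (coef2 g i j)) -> (size g <= 2)%N -> (forall i, leq (size g`_i) 2) ->
  exists j0 j1 (G : {poly {poly L}}),
    [/\ (nu0 < j0)%O && (nu1 < j1)%O, (forall i j, V (coef2 G i j)), G != 0,
        coef_values_distinct S G &
        eval2 g y0 y1 = eval2 G (yj v0 s0 y0 j0) (yj v1 s1 y1 j1)].
Proof.
move=> Vg gsz gisz; rewrite (bilinear_bipoly gsz gisz) eval2_bipoly mul0r addr0.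
set g00 := coef2 g 0 0; set g01 := coef2 g 0 1; set g10 := coef2 g 1 0; set g11 := coef2 g 1 1.
case: (boolP [&& g00 == 0, g01 == 0, g10 == 0 & g11 == 0]).
  move=> /and4P[/eqP-> /eqP-> /eqP-> /eqP->].
  have [j0 [j1 [G [nuj VG G_neq0 Gdist G0]]]] := exists_square_relation nu0 nu1.
  by exists j0, j1, G; split=> //; rewrite G0 !(mul0r, addr0).
by apply: exists_bilinear_change; apply: Vg.
Qed.
End ChangeOfVariables.

Theorem lemma1p4 (L : fieldType) (V V' : L -> Prop)
  (d0 : Order.disp_t) (I0 : orderType d0) (s0 : I0 -> I0)
  (d1 : Order.disp_t) (I1 : orderType d1) (s1 : I1 -> I1)
  (v0 : I0 -> L) (v1 : I1 -> L) (y0 y1 : L) :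
  (* V' is a valuation ring with fraction field K' = L *)
  valuation_ring V' ->
  (* V is a subring of V' with V = V' ∩ K, K the fraction field of V *)
  subring V -> (forall x, V x -> V' x) ->
  (forall x, frac_field V x -> V' x -> V x) ->
  (* immediate: residue fields equal *)
  (forall x, V' x -> exists a, V a /\ maxideal V' (x - a)) ->
  (* immediate: value groups equal *)
  (forall x, x != 0 -> exists a, frac_field V a /\ a != 0 /\ is_unit_of V' (x / a)) ->
  V' y0 -> y1 = y0 ^+ 2 ->
  (* K' = K(y0) *)
  generated_by (frac_field V) y0 ->
  limit_ordinal_type I0 -> is_succ s0 ->
  limit_ordinal_type I1 -> is_succ s1 ->
  (forall j, V (v0 j)) -> pseudo_convergent V' v0 -> pseudo_limit V' v0 y0 ->
  (forall w, frac_field V w -> ~ pseudo_limit V' v0 w) ->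
  (forall j, V (v1 j)) -> pseudo_convergent V' v1 -> pseudo_limit V' v1 y1 ->
  (forall w, frac_field V w -> ~ pseudo_limit V' v1 w) ->
  forall g : {poly {poly L}},
    (forall i j, V (coef2 g i j)) -> (size g <= 2)%N -> (forall i, leq (size g`_i) 2) ->
  forall (nu0 : I0) (nu1 : I1),
  exists (j0 : I0) (j1 : I1) (c : L) (g1 : {poly {poly L}}),
    (nu0 < j0)%O /\ (nu1 < j1)%O /\ V c /\ c != 0 /\
      (forall i j, V (coef2 g1 i j)) /\
      eval2 g y0 y1 = c * eval2 g1 (yj v0 s0 y0 j0) (yj v1 s1 y1 j1) /\
      (exists i j, is_unit_of V (coef2 g1 i j)) /\
      (forall i j i' j' : nat, (i, j) <> (0%N, 0%N) -> (i', j') <> (0%N, 0%N) ->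
         (i, j) <> (i', j') -> (coef2 g1 i j) != 0 -> (coef2 g1 i' j') != 0 ->
         ~ vsame V' (coef2 g1 i j) (coef2 g1 i' j')).
Proof.
move=> hV' hV _ hK _ _ _ y1E _ _ hs0 _ hs1 hv0 _ hy0 hnl0 hv1 _ hy1 hnl1 g Vg gsz gisz nu0 nu1.
have [j0 [j1 [G [/andP[nuj0 nuj1] VG G_neq0 Gdist gE]]]] :=
  exists_change_of_variables hV' hV hs0 hs1 hv0 hv1 hy0 hy1 hnl0 hnl1 y1E nu0 nu1 Vg gsz gisz.
have [i [j [c_neq0 cmin]]] := exists_vmin_coef2 hV' G_neq0.
set c := coef2 G i j in c_neq0 cmin.
have Vdiv i' j' : V (coef2 G i' j' / c).
  exact: hK (frac_field_div hV (VG i' j') (VG i j)) ((cmin i' j').2 c_neq0).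
exists j0, j1, c, (G * c^-1%:P%:P); split=> //; split=> //; split; first exact: VG.
split=> //; split; first by move=> i' j'; rewrite coef2_mulC.
split; first by rewrite gE eval2_mulC mulrC divfK.
split; first by exists i, j; rewrite coef2_mulC divff //; apply: is_unit_of1.
exact: (coef_values_distinct_mulC hV' (invr_neq0 c_neq0) Gdist).
Qed.
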